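(* Let $\mathcal{M}=(E_t,\mathcal{T})$ be a simple oriented matroid, let $k$ be an integer with $1\le k\le|\mathcal{T}|/2$, and put $h=\lfloor(|\mathcal{T}|-k+1)/2\rfloor$ and $\mathcal{P}=\bigcup_{e\in E_t}\binom{\mathcal{T}^+_e}{h}$. Then \[ \mathring{\kappa}^{\ast}_k(\mathcal{M})=\binom{|\mathcal{T}|/2}{k}2^k+\sum_{\substack{G\in\boldsymbol{\mathcal{E}}(\mathcal{P}):\\ 0<|G|\le|\mathcal{T}|-k}}\mu_{\boldsymbol{\mathcal{E}}}(\hat0,G)\sum_{j=0}^{k}\binom{|G\cup-G|-|G|}{j}\binom{\tfrac12(|\mathcal{T}|-|G\cup-G|)}{k-j}2^{k-j}. \]
   Context: Let $t\ge 1$ and $E_t=\{1,\dots,t\}$. $\mathcal{M}=(E_t,\mathcal{T})$ is a simple oriented matroid with set of topes $\mathcal{T}\subseteq\{+,-\}^{E_t}$, closed under negation. For $e\in E_t$, $\mathcal{T}^+_e=\{T\in\mathcal{T}: T(e)=+\}$. For $G\subseteq\mathcal{T}$, $-G=\{-T:T\in G\}$. $\binom{X}{j}$ denotes the family of $j$-element subsets of $X$. For a family $\mathcal{G}$ of subsets of $\mathcal{T}$, $\boldsymbol{\mathcal{E}}(\mathcal{G})$ is the lattice consisting of all unions $\bigcup_{F\in\mathcal{F}}F$ over nonempty subfamilies $\mathcal{F}\subseteq\mathcal{G}$, ordered by inclusion, together with a new least element $\hat0$ interpreted as the empty set (with $|\hat0|=0$); $\mu_{\boldsymbol{\mathcal{E}}}$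 is its Möbius function. A tope committee for $\mathcal{M}$ is a subset $\mathcal{K}^{\ast}\subset\mathcal{T}$ with $|\{T\in\mathcal{K}^{\ast}: T(e)=+\}|>\tfrac12|\mathcal{K}^{\ast}|$ for every $e\in E_t$; $\mathring{\kappa}^{\ast}_k(\mathcal{M})$ is the number of tope committees of cardinality $k$ containing no pair of opposite topes. Binomial coefficients $\binom{n}{j}$ are $0$ when $j>n$ or $j<0$. *)

From HB Require Import structures.
From mathcomp Require Import all_boot all_order all_algebra.
Set Implicit Arguments. Unset Strict Implicit. Unset Printing Implicit Defensive.
Import GRing.Theory Num.Theory.

(* Sign vectors on E_t = 'I_t : None = 0, Some true = +, Some false = -. *)
Definition signvec (t : nat) := {ffun 'I_t -> option bool}.
(* Topes: sign vectors with full support, true = +, false = -. *)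
Definition tope (t : nat) := {ffun 'I_t -> bool}.

Definition sv_zero t : signvec t := [ffun _ => None].
Definition sv_neg t (X : signvec t) : signvec t := [ffun e => omap negb (X e)].
Definition sv_comp t (X Y : signvec t) : signvec t :=
  [ffun e => if X e is Some b then Some b else Y e].
Definition sv_sep t (X Y : signvec t) (e : 'I_t) : bool :=
  match X e, Y e with Some a, Some b => a != b | _, _ => false end.

(* Covector axioms of an oriented matroid (Bjorner et al., Def. 4.1.1). *)
Definition om_covectors t (L : {set signvec t}) : Prop :=
  [/\ sv_zero t \in L,
      (forall X, X \in L -> sv_neg X \in L),
      (forall X Y, X \in L -> Y \in L -> sv_comp X Y \in L) &
      (forall X Y e, X \in L -> Y \in L -> sv_sep X Y e ->
         exists2 Z, Z \in L & (Z e = None /\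
           forall f, ~~ sv_sep X Y f -> Z f = sv_comp X Y f))].

(* Simple: no loops, no parallel or antiparallel pairs of elements. *)
Definition om_simple t (L : {set signvec t}) : Prop :=
  (forall e, exists2 X, X \in L & X e != None) /\
  (forall e f, e != f ->
     (exists2 X, X \in L & X f != X e) /\
     (exists2 X, X \in L & X f != omap negb (X e))).

Definition topes t (L : {set signvec t}) : {set tope t} :=
  [set T : tope t | [ffun e => Some (T e)] \in L].

Definition tneg t (T : tope t) : tope t := [ffun e => ~~ T e].
Definition negset t (G : {set tope t}) : {set tope t} := [set tneg T | T in G].

Definition Tplus t (TT : {set tope t}) (e : 'I_t) : {set tope t} :=
  [set T in TT | T e].

Definition is_committee t (K : {set tope t}) : bool :=
  [forall e : 'I_t, #|K| < 2 * #|[set T in K | T e]|].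

Definition no_opposite t (K : {set tope t}) : bool :=
  [forall T in K, tneg T \notin K].

Definition kappa_ring t (TT : {set tope t}) (k : nat) : nat :=
  #|[set K : {set tope t} | [&& K \subset TT, #|K| == k, is_committee K
                                & no_opposite K]]|.

(* The underlying set family of E(G): the empty set (standing for \hat0,
   which is not otherwise a union since members of P are nonempty here) and
   all unions of nonempty subfamilies of G, ordered by inclusion. *)
Definition union_lattice (X : finType) (P : {set {set X}}) : {set {set X}} :=
  set0 |: [set (\bigcup_(F in FF) F) | FF : {set {set X}} in powerset P & FF != set0].

(* Recursion with fuel n; used with n = #|G| (sufficient fuel). *)
Fixpoint mob_aux (X : finType) (Lat : {set {set X}}) (n : nat) (G : {set X})
  : int :=
  if G == set0 then (1%R : int) else
  match n with
  | 0 => 0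
  | n'.+1 => (- \sum_(H in Lat | H \proper G) mob_aux Lat n' H)%R
  end.

Definition mobius0 (X : finType) (Lat : {set {set X}}) (G : {set X}) : int :=
  mob_aux Lat #|G| G.

From HB Require Import structures.
From mathcomp Require Import all_boot all_order all_algebra zify ring.
Import GRing.Theory Num.Theory.
Set Implicit Arguments. Unset Strict Implicit. Unset Printing Implicit Defensive.

(* A [k]-set [K] of topes is a committee iff, for every [e], fewer than
   [h = (|T| - k + 1) / 2] topes of [T^+_e] lie outside [K] (as [|T^+_e| = |T|/2]),
   i.e. iff [K] meets every member of the family [P] of [h]-subsets of the
   [T^+_e].  Moebius inversion on the union lattice [E(P)] counts the sets
   meeting every member of [P] as [sum_G mu(0,G) #{K | K disjoint from G}].
   The opposite-free [k]-subsets of [T \ G] are counted directly: the topes of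
   [-G \ G] have lost their partner, the remaining topes of [T \ (G u -G)] come
   in opposite pairs.  The term [G = 0] gives the first summand and the terms
   with [|G| > |T| - k] vanish. *)

Section MobiusUnionLattice.
Variable X : finType.
Implicit Types (Lat P FF A : {set {set X}}) (G H S : {set X}).

Lemma mob_aux_fuel Lat n m G : #|G| <= n -> #|G| <= m ->
  mob_aux Lat n G = mob_aux Lat m G.
Proof.
elim: n m G => [|n IH] [|m] G /=; case: eqP => // /eqP G0;
  rewrite ?leqn0 ?cards_eq0 ?(negbTE G0) // => Gn Gm.
congr (- _)%R; apply: eq_bigr => H /andP[_ /proper_card HG].
by apply: IH; rewrite -ltnS (leq_trans HG).
Qed.

Lemma mobius0_set0 Lat : mobius0 Lat set0 = 1%R.
Proof. by rewrite /mobius0 cards0 /= eqxx. Qed.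

Lemma mobius0_rec Lat G : G != set0 ->
  mobius0 Lat G = (- \sum_(H in Lat | H \proper G) mobius0 Lat H)%R.
Proof.
rewrite /mobius0 -card_gt0; case E: #|G| => [|n] //= _.
rewrite -cards_eq0 E /=; congr (- _)%R.
by apply: eq_bigr => H /andP[_ /proper_card HG]; apply: mob_aux_fuel; rewrite // -ltnS -E.
Qed.

Lemma set0_union_lattice P : set0 \in union_lattice P.
Proof. by rewrite !inE eqxx. Qed.

Lemma bigcup_union_lattice P FF : FF \subset P -> FF != set0 ->
  \bigcup_(F in FF) F \in union_lattice P.
Proof.
by move=> sFF FF0; rewrite !inE; apply/orP; right; apply: imset_f; rewrite !inE sFF.
Qed.

Lemma union_latticeP P G : G \in union_lattice P ->
  G = set0 \/ exists2 FF : {set {set X}}, FF \subset P & G = \bigcup_(F in FF) F.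
Proof.
rewrite !inE => /orP[/eqP->|/imsetP[FF]]; first by left.
by rewrite !inE => /andP[sFF _] ->; right; exists FF.
Qed.

Lemma union_lattice_sub P G (U : {set X}) :
  (forall F, F \in P -> F \subset U) -> G \in union_lattice P -> G \subset U.
Proof.
move=> sPU /union_latticeP[->|[FF sFF ->]]; first exact: sub0set.
by apply/bigcupsP=> F /(subsetP sFF)/sPU.
Qed.

(* The members of [union_lattice P] below [S] form an interval [\hat0, U] with
   [U] the union of the members of [P] inside [S], unless there are none. *)
Lemma sum_mobius0_sub P S : (forall F, F \in P -> F != set0) ->
  (\sum_(G in union_lattice P | G \subset S) mobius0 (union_lattice P) G =
   (~~ [exists F in P, F \subset S])%:R)%R.
Proof.
move=> P0; set EP := union_lattice P.
have [/exists_inP[F0 F0P F0S]|/exists_inP noF] := boolP [exists F in P, F \subset S].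
  set U := \bigcup_(F in [set F in P | F \subset S]) F.
  have US : U \subset S by apply/bigcupsP=> F; rewrite inE => /andP[].
  have F0U : F0 \subset U by apply: bigcup_sup; rewrite inE F0P.
  have U0 : U != set0 by apply: contraNneq (P0 _ F0P); rewrite -subset0 => <-.
  have UE : U \in EP.
    apply: bigcup_union_lattice; first by apply/subsetP=> F; rewrite inE => /andP[].
    by apply/set0Pn; exists F0; rewrite inE F0P.
  rewrite (eq_bigl (fun G => (G \in EP) && (G \subset U))); last first.
    move=> G; apply/andP/andP => [[GE GS]|[GE GU]]; last first.
      by split=> //; apply: subset_trans US.
    split=> //; case: (union_latticeP GE) GS => [->|[FF sFF ->]] GS; first exact: sub0set.
    apply/bigcupsP=> F FF_F; apply: bigcup_sup.
    by rewrite inE (subsetP sFF) //=; apply: subset_trans GS; apply: bigcup_sup.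
  rewrite (bigD1 U) /=; last by rewrite UE subxx.
  rewrite (mobius0_rec _ U0) addrC.
  rewrite (eq_bigl (fun H => (H \in EP) && (H \proper U))) ?subrr //.
  by move=> H; rewrite properEneq -andbA [_ && (_ != _)]andbC.
rewrite (eq_bigl (pred1 set0)) ?big_pred1_eq ?mobius0_set0 //.
move=> G /=; apply/andP/eqP => [[GE GS]|->]; last by rewrite set0_union_lattice sub0set.
case: (union_latticeP GE) => [//|[FF sFF GU]].
have [FF0|[F FF_F]] := set_0Vmem FF; first by rewrite GU FF0 big_set0.
case: noF; exists F; first exact: (subsetP sFF).
by apply: subset_trans GS; rewrite GU bigcup_sup.
Qed.

Lemma card_avoiding_mobius P A : (forall F, F \in P -> F != set0) ->
  Posz #|[set K in A | ~~ [exists F in P, [disjoint F & K]]]| =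
  (\sum_(G in union_lattice P) mobius0 (union_lattice P) G *
     Posz #|[set K in A | [disjoint G & K]]|)%R.
Proof.
move=> P0; set EP := union_lattice P.
have cardE (p : pred {set X}) :
    Posz #|[set K in A | p K]| = (\sum_(K in A) (p K)%:R)%R.
  rewrite -natz -sum1_card natr_sum big_mkcond [RHS]big_mkcond /=.
  by apply: eq_bigr => K _; rewrite inE; case: (K \in A); case: (p K).
transitivity (\sum_(K in A) \sum_(G in EP | G \subset ~: K) mobius0 EP G)%R.
  rewrite cardE; apply: eq_bigr => K _; rewrite sum_mobius0_sub //.
  by congr ((~~ _)%:R)%R; apply: eq_existsb => F; rewrite disjoints_subset.
under eq_bigr do rewrite big_mkcondr; rewrite exchange_big /=.
apply: eq_bigr => G _; rewrite cardE mulr_sumr; apply: eq_bigr => K _.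
by rewrite disjoints_subset; case: ifP; rewrite ?mulr1 ?mulr0.
Qed.

End MobiusUnionLattice.

(* Choose [j] of [a] unpaired elements, then [k - j] of [b] opposite pairs and
   one element of each chosen pair. *)
Definition nopp_number a b k := \sum_(j < k.+1) 'C(a, j) * 'C(b, k - j) * 2 ^ (k - j).

Lemma nopp_number0 a b : nopp_number a b 0 = 1.
Proof. by rewrite /nopp_number big_ord1 !bin0. Qed.

Lemma nopp_number0l b k : nopp_number 0 b k = 'C(b, k) * 2 ^ k.
Proof. by rewrite /nopp_number big_ord_recl big1 ?addn0 ?subn0 ?mul1n. Qed.

Lemma nopp_numberS a b k :
  nopp_number a.+1 b k.+1 = nopp_number a b k + nopp_number a b k.+1.
Proof.
rewrite /nopp_number big_ord_recl [X in _ = _ + X]big_ord_recl /= !bin0 addnCA.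
rewrite -big_split; congr (_ + _); apply: eq_bigr => j _.
by rewrite /bump /= !add1n subSS binS !mulnDl addnC.
Qed.

Section NoOpposite.
Variable t : nat.
Implicit Types (i : nat) (x y : tope t) (W R A G K : {set tope t}).

Lemma tnegK : involutive (@tneg t).
Proof. by move=> x; apply/ffunP=> e; rewrite !ffunE negbK. Qed.

Lemma tneg_neq x : 0 < t -> tneg x != x.
Proof.
by move=> t_gt0; apply/eqP=> /ffunP/(_ (Ordinal t_gt0)); rewrite ffunE; case: (x _).
Qed.

Lemma mem_negset G x : (x \in negset G) = (tneg x \in G).
Proof. by rewrite -[in LHS](tnegK x) (mem_imset _ _ (can_inj tnegK)). Qed.

Definition tneg_closed W := {in W, forall x, tneg x \in W}.

Definition nopp_subsets W i : {set {set tope t}} :=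
  [set K : {set tope t} | [&& K \subset W, #|K| == i & no_opposite K]].

Lemma no_oppositeP K : reflect {in K, forall x, tneg x \notin K} (no_opposite K).
Proof. exact: forall_inP. Qed.

Lemma nopp_subsets0 W : nopp_subsets W 0 = [set set0].
Proof.
apply/setP=> K; rewrite !inE cards_eq0; case: eqP => [->|] /=; last by rewrite andbF.
by rewrite sub0set; apply/no_oppositeP=> x; rewrite inE.
Qed.

Lemma nopp_subsets_gt W i : #|W| < i -> nopp_subsets W i = set0.
Proof.
move=> ltWi; apply/setP=> K; rewrite !inE; apply/and3P=> -[/subset_leq_card leKW /eqP cK _].
by move: (leq_ltn_trans leKW ltWi); rewrite cK ltnn.
Qed.

Lemma nopp_subsets_disjoint W G i :
  [set K in nopp_subsets W i | [disjoint G & K]] = nopp_subsets (W :\: G) i.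
Proof.
apply/setP=> K; rewrite !inE subsetD disjoint_sym.
by apply/andP/and3P => [[/and3P[-> -> ->] ->]|[/andP[-> ->] -> ->]].
Qed.

Hypothesis t_gt0 : 0 < t.

(* Adding [x] is a bijection onto the members containing [x]; their other
   elements avoid both [x] and [tneg x]. *)
Lemma card_nopp_subsets_mem W x i : x \in W ->
  #|[set K in nopp_subsets W i.+1 | x \in K]| =
  #|nopp_subsets (W :\: [set x; tneg x]) i|.
Proof.
move=> xW; set V := W :\: [set x; tneg x].
have xV : x \notin V by rewrite !inE eqxx.
have nxV : tneg x \notin V by rewrite !inE eqxx orbT.
have sVW : V \subset W by apply: subsetDl.
have injU1 : {in nopp_subsets V i &, injective (fun K => x |: K)}.
  move=> K1 K2; rewrite !inE => /and3P[sK1 _ _] /and3P[sK2 _ _] E.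
  have x1 : x \notin K1 by apply: contra xV; apply: (subsetP sK1).
  have x2 : x \notin K2 by apply: contra xV; apply: (subsetP sK2).
  by rewrite -(setU1K x1) E setU1K.
rewrite -(card_in_imset injU1); apply: eq_card => K; rewrite inE.
apply/andP/imsetP => [[]|[K' K'V ->]].
  rewrite inE => /and3P[sKW /eqP cK /no_oppositeP nK] xK.
  exists (K :\ x); last by rewrite setD1K.
  rewrite inE; apply/and3P; split.
  - apply/subsetP=> y; rewrite !inE => /andP[yx yK].
    rewrite (subsetP sKW) // andbT negb_or yx.
    by apply: contra (nK x xK) => /eqP <-.
  - by move: cK; rewrite (cardsD1 x K) xK add1n => -[->].
  - by apply/no_oppositeP=> y; rewrite !inE => /andP[_ /nK/negbTE ->]; rewrite andbF.
move: K'V; rewrite inE => /and3P[sK'V /eqP cK' /no_oppositeP nK'].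
have xK' : x \notin K' by apply: contra xV; apply: (subsetP sK'V).
split; last exact: setU11.
rewrite inE; apply/and3P; split.
- by rewrite subUset sub1set xW (subset_trans sK'V sVW).
- by rewrite cardsU1 xK' cK'.
- apply/no_oppositeP=> y; rewrite !inE => /predU1P[->|yK'].
    rewrite (negbTE (tneg_neq _ t_gt0)) /=.
    by apply: contra nxV; apply: (subsetP sK'V).
  apply/norP; split; last exact: nK'.
  by apply/eqP=> E; move: nxV; rewrite -E tnegK (subsetP sK'V).
Qed.
Lemma card_nopp_subsetsS W x i : x \in W ->
  #|nopp_subsets W i.+1| =
  #|nopp_subsets (W :\: [set x; tneg x]) i| + #|nopp_subsets (W :\ x) i.+1|.
Proof.
move=> xW; rewrite -(cardsID [set K : {set tope t} | x \in K]) -setIdE.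
rewrite card_nopp_subsets_mem //.
congr (_ + _); apply: eq_card => K; rewrite !inE subsetD1.
by case: (K \subset W); case: (x \in K); rewrite ?andbF.
Qed.

Lemma card_nopp_subsets_closed R i : tneg_closed R ->
  #|nopp_subsets R i| = 'C(#|R| %/ 2, i) * 2 ^ i.
Proof.
elim: {R}_.+1 {-2}R (ltnSn #|R|) i => // n IH R ltRn [|i] clR.
  by rewrite nopp_subsets0 cards1 bin0.
have [R0|[x xR]] := set_0Vmem R.
  by rewrite R0 nopp_subsets_gt ?cards0 ?bin0n.
set V := R :\: [set x; tneg x].
have nxRx : tneg x \in R :\ x by rewrite !inE tneg_neq // clR.
have RxE : (R :\ x) :\ tneg x = V.
  by apply/setP=> y; rewrite !inE negb_or andbCA andbA.
have RxE2 : (R :\ x) :\: [set tneg x; tneg (tneg x)] = V.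
  by apply/setP=> y; rewrite !inE tnegK !negb_or; case: (y == x); case: (y == tneg x).
have cardR : #|R| = #|V|.+2.
  by rewrite (cardsD1 x R) xR (cardsD1 (tneg x) (R :\ x)) nxRx RxE.
have clV : tneg_closed V.
  move=> y; rewrite !inE !negb_or => /andP[/andP[yx ynx] yR].
  rewrite clR // andbT (inj_eq (can_inj tnegK)) yx andbT.
  by apply: contra ynx => /eqP <-; rewrite tnegK.
have ltVn : #|V| < n by move: ltRn; rewrite cardR; lia.
rewrite (card_nopp_subsetsS _ xR) (card_nopp_subsetsS _ nxRx) RxE RxE2 !IH // cardR.
have -> : #|V|.+2 %/ 2 = (#|V| %/ 2).+1 by lia.
by rewrite binS expnS; ring.
Qed.

Lemma card_nopp_subsetsU A R i : tneg_closed R ->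
  [disjoint A & R] -> [disjoint A & negset A] ->
  #|nopp_subsets (A :|: R) i| = nopp_number #|A| (#|R| %/ 2) i.
Proof.
move=> clR; elim: {A}_.+1 {-2}A (ltnSn #|A|) i => // n IH A ltAn [|i] dAR dAnA.
  by rewrite nopp_subsets0 cards1 nopp_number0.
have [A0|[x xA]] := set_0Vmem A.
  by rewrite A0 set0U cards0 nopp_number0l card_nopp_subsets_closed.
set A' := A :\ x.
have xR : x \notin R by rewrite (disjointFr dAR xA).
have nxA : tneg x \notin A by rewrite (disjointFl dAnA) // mem_negset tnegK.
have nxR : tneg x \notin R by apply: contra xR => /clR; rewrite tnegK.
have E1 : (A :|: R) :\ x = A' :|: R.
  by apply/setP=> y; rewrite !inE; case: eqP => // ->; rewrite (negbTE xR).
have E2 : (A :|: R) :\: [set x; tneg x] = A' :|: R.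
  apply/setP=> y; rewrite !inE negb_or; case: eqP => [->|] /=; first by rewrite (negbTE xR).
  by case: eqP => // ->; rewrite (negbTE nxA) (negbTE nxR).
have sA'A : A' \subset A by apply: subsetDl.
have IHA' j : #|nopp_subsets (A' :|: R) j| = nopp_number #|A'| (#|R| %/ 2) j.
  apply: IH; first by move: ltAn; rewrite (cardsD1 x A) xA.
    exact: disjointWl sA'A dAR.
  exact: disjointWl sA'A (disjointWr (imsetS _ sA'A) dAnA).
rewrite (card_nopp_subsetsS _ (_ : x \in A :|: R)) ?inE ?xA // E1 E2 !IHA'.
by rewrite (cardsD1 x A) xA nopp_numberS.
Qed.

(* [W :\: G] splits into the unpaired topes [negset G :\: G] and the
   negation-closed rest [W :\: (G :|: negset G)]. *)
Lemma card_nopp_subsets_setD W G i : tneg_closed W -> G \subset W ->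
  #|nopp_subsets (W :\: G) i| =
  nopp_number (#|G :|: negset G| - #|G|) ((#|W| - #|G :|: negset G|) %/ 2) i.
Proof.
move=> clW sGW; set N := negset G.
have sNW : N \subset W.
  by apply/subsetP=> x; rewrite mem_negset => /(subsetP sGW)/clW; rewrite tnegK.
have -> : W :\: G = (N :\: G) :|: (W :\: (G :|: N)).
  apply/setP=> x; rewrite !inE; case: (x \in G) => //=.
  by case xN: (x \in N) => //=; rewrite (subsetP sNW).
rewrite card_nopp_subsetsU.
- rewrite cardsDS ?subUset ?sGW //; congr (nopp_number _ _ _).
  by rewrite -cardsDS ?subsetUl // setDUl setDv set0U.
- move=> x; rewrite !inE !mem_negset tnegK => /andP[/norP[xG xN] xW].
  by rewrite negb_or xN xG clW.
- by rewrite disjoints_subset; apply/subsetP=> x /setDP[xN _]; rewrite !inE xN orbT.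
- rewrite disjoints_subset; apply/subsetP=> x /setDP[_ xG].
  by rewrite !inE mem_negset !inE mem_negset tnegK (negbTE xG) andbF.
Qed.

End NoOpposite.

Lemma topes_tneg_closed t (L : {set signvec t}) :
  om_covectors L -> tneg_closed (topes L).
Proof.
case=> _ negL _ _ x; rewrite !inE => /negL.
by congr (_ \in L); apply/ffunP=> e; rewrite !ffunE.
Qed.

Lemma card_Tplus t (TT : {set tope t}) e :
  tneg_closed TT -> #|TT| = 2 * #|Tplus TT e|.
Proof.
move=> clT; rewrite -(cardsID (Tplus TT e) TT) mul2n -addnn.
have sTe : Tplus TT e \subset TT by apply/subsetP=> x; rewrite inE => /andP[].
have -> : TT :\: Tplus TT e = negset (Tplus TT e).
  apply/setP=> x; rewrite !inE mem_negset !inE ffunE.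
  case xT: (x \in TT); first by rewrite /= clT ?andbT.
  by rewrite andbF; apply/esym/andP=> -[nxT _]; move: (clT _ nxT); rewrite tnegK xT.
by rewrite (setIidPr sTe) /negset card_imset //; exact: (can_inj (@tnegK t)).
Qed.

Definition committee_blockers t (TT : {set tope t}) k : {set {set tope t}} :=
  [set S : {set tope t} |
     [exists e, (S \subset Tplus TT e) && (#|S| == (#|TT| - k + 1) %/ 2)]].

Lemma committee_blockers_sub t (TT : {set tope t}) k S :
  S \in committee_blockers TT k -> S \subset TT.
Proof.
rewrite inE => /existsP[e /andP[sSe _]].
by apply: subset_trans sSe _; apply/subsetP=> x; rewrite inE => /andP[].
Qed.

Lemma committee_blockers_neq0 t (TT : {set tope t}) k S :
  0 < k -> 2 * k <= #|TT| -> S \in committee_blockers TT k -> S != set0.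
Proof.
move=> k_gt0 lekT; rewrite inE -card_gt0 => /existsP[e /andP[_ /eqP ->]].
by rewrite divn_gt0 //; lia.
Qed.

Lemma committee_threshold c k m : c <= k -> k <= m ->
  (k < 2 * c) = ~~ ((2 * m - k + 1) %/ 2 <= m - c).
Proof. by move=> ck km; apply/idP/idP; lia. Qed.

Lemma is_committeeE t (TT K : {set tope t}) :
  tneg_closed TT -> K \subset TT -> 2 * #|K| <= #|TT| ->
  is_committee K = ~~ [exists S in committee_blockers TT #|K|, [disjoint S & K]].
Proof.
move=> clT sKT leKT; set h := (#|TT| - #|K| + 1) %/ 2.
have -> : [exists S in committee_blockers TT #|K|, [disjoint S & K]] =
          [exists e, h <= #|Tplus TT e :\: K|].
  apply/exists_inP/existsP => [[S]|[e /card_geqP[s [us cs ssK]]]].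
    rewrite inE => /existsP[e /andP[sSe /eqP cS]] dSK; exists e; rewrite /h -cS.
    by apply: subset_leq_card; rewrite subsetD sSe dSK.
  have : [set x in s] \subset Tplus TT e :\: K by apply/subsetP=> x; rewrite inE => /ssK.
  rewrite subsetD => /andP[sSe dSK]; exists [set x in s] => //.
  by rewrite inE; apply/existsP; exists e; rewrite sSe cardsE (card_uniqP us) cs eqxx.
rewrite /is_committee negb_exists; apply: eq_forallb => e.
have -> : [set T in K | T e] = Tplus TT e :&: K.
  apply/setP=> x; rewrite !inE andbC; have [xK|] := boolP (x \in K); last by rewrite !andbF.
  by rewrite (subsetP sKT).
rewrite cardsD /h (card_Tplus e clT) (@committee_threshold _ _ #|Tplus TT e|) //.
  by rewrite subset_leq_card ?subsetIr.
by move: leKT; rewrite (card_Tplus e clT) leq_pmul2l.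
Qed.

Theorem mainTheorem6 (t : nat) (L : {set signvec t}) (k : nat) :
  1 <= t -> om_covectors L -> om_simple L ->
  1 <= k -> 2 * k <= #|topes L| ->
  let TT := topes L in
  let h := (#|TT| - k + 1) %/ 2 in
  let P := [set S : {set tope t} |
              [exists e : 'I_t, (S \subset Tplus TT e) && (#|S| == h)]] in
  let EP := union_lattice P in
  Posz (kappa_ring TT k) =
    (Posz ('C(#|TT| %/ 2, k) * 2 ^ k)%N +
     \sum_(G in EP | ((0 < #|G|) && (#|G| <= #|TT| - k))%N)
       mobius0 EP G *
       Posz (\sum_(j < k.+1)
          'C(#|G :|: negset G| - #|G|, j) *
          'C((#|TT| - #|G :|: negset G|) %/ 2, k - j) * 2 ^ (k - j))%N)%R.
Proof.
move=> t_gt0 omL _ k_gt0 lekT TT h P EP; have {}lekT : 2 * k <= #|TT| := lekT.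
have clT : tneg_closed TT := topes_tneg_closed omL.
have PE : P = committee_blockers TT k by [].
have sEP G : G \in EP -> G \subset TT.
  by apply: union_lattice_sub => S; rewrite PE => /committee_blockers_sub.
have kappaE : kappa_ring TT k =
    #|[set K in nopp_subsets TT k | ~~ [exists S in P, [disjoint S & K]]]|.
  apply: eq_card => K; rewrite !inE PE.
  have [sKT|] := boolP (K \subset TT) => //=; have [cK|] := eqVneq #|K| k => //=.
  by rewrite (is_committeeE clT sKT) cK // andbC.
rewrite kappaE card_avoiding_mobius -/EP; last first.
  by move=> S; rewrite PE; apply: committee_blockers_neq0.
rewrite (bigD1 set0) ?set0_union_lattice //= mobius0_set0 mul1r.
rewrite nopp_subsets_disjoint setD0 card_nopp_subsets_closed //; congr (_ + _)%R.
rewrite (bigID (fun G : {set tope t} => #|G| <= #|TT| - k)) /= [X in (_ + X)%R]big1 ?addr0.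
  apply: eq_big => [G|G /andP[/andP[GE _] _]]; first by rewrite card_gt0 andbA.
  by rewrite nopp_subsets_disjoint card_nopp_subsets_setD ?sEP.
move=> G /andP[/andP[GE _]]; rewrite -ltnNge => ltG.
rewrite nopp_subsets_disjoint nopp_subsets_gt ?cards0 ?mulr0 //.
rewrite cardsDS ?sEP // ltn_subCl ?subset_leq_card ?sEP //.
exact: leq_trans (leq_pmull _ _) lekT.
Qed.
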